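(* Let $a, b, n$ be positive integers with $b>1$, $n>1$ and $\gcd(r_b(n),a)=1$. Then the set of pseudo-Frobenius numbers of $S_a(b,n)$ is \[\operatorname{PF}(S_a(b,n)) = \{(n-i+1)\,(b^n - 1 - a) + a\, r_b(n) \mid i = 2,\ldots,n\},\] and consequently the type of $S_a(b,n)$ equals $n-1$.
   Context: For $\ell \ge 1$, $r_b(\ell) = \sum_{j=0}^{\ell-1} b^j$, and $r_b(0)=0$. For $i \ge 1$, $a_i := r_b(n) + a\, r_b(i-1)$; $S_a(b,n)$ is the numerical semigroup generated by $\{a_i\}$. An integer $x$ is a pseudo-Frobenius number of a numerical semigroup $S$ if $x \notin S$ and $x + s \in S$ for all $s \in S\setminus\{0\}$; $\operatorname{PF}(S)$ is the set of these, and the type $\operatorname{t}(S)$ is its cardinality. *)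

From mathcomp Require Import all_boot all_order all_algebra.
Set Implicit Arguments. Unset Strict Implicit. Unset Printing Implicit Defensive.
Import Order.TTheory GRing.Theory Num.Theory.

Definition rb (b l : nat) : nat := \sum_(j < l) b ^ j.

(* generator a_i = r_b(n) + a * r_b(i-1), meaningful for i >= 1 *)
Definition gen (a b n i : nat) : nat := rb b n + a * rb b i.-1.

Inductive inS (a b n : nat) : nat -> Prop :=
  | inS0 : inS a b n 0
  | inS_add x i : 0 < i -> inS a b n x -> inS a b n (x + gen a b n i).

Definition inSZ (a b n : nat) (x : int) : Prop :=
  exists m : nat, x = Posz m /\ inS a b n m.

Definition pseudo_frobenius (a b n : nat) (x : int) : Prop :=
  ~ inSZ a b n x /\ forall s : nat, inS a b n s -> s <> 0%N -> inSZ a b n (x + Posz s)%R.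

Definition has_type (a b n k : nat) : Prop :=
  exists s : seq int, uniq s /\ (forall x, pseudo_frobenius a b n x <-> x \in s)
                      /\ size s = k.

From mathcomp Require Import all_boot all_order all_algebra.
From mathcomp Require Import zify ring.
Import GRing.Theory Num.Theory.

Set Implicit Arguments.
Unset Strict Implicit.
Unset Printing Implicit Defensive.

(* An element of S_a(b,n) is [k * r_b(n) + a * t] with [t] a sum of [k] repunits.
   Modulo [b ^ n - 1 = (b - 1) * r_b(n)], a family of powers of [b] with sum a
   positive multiple of [b ^ n - 1] has at least [n * (b - 1)] members (carry [b]
   copies of [b ^ e] into one of [b ^ (e + 1)], cyclically).  With [gcd(r_b(n), a) = 1]
   this shows that the candidates [j * (b - 1) * r_b(n) + a * (r_b(n) - j)],
   [0 < j < n], are gaps; adding a generator to one lands in S by an explicit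
   repunit decomposition.  Conversely, writing a gap [x] as [a * m + z * r_b(n)] and
   expanding [m] greedily in repunits shows [x + s] is a candidate for some [s] in
   S, so the candidates are exactly the pseudo-Frobenius numbers. *)

Lemma rb0 b : rb b 0 = 0.
Proof. by rewrite /rb big_ord0. Qed.

Lemma rbS b q : rb b q.+1 = b * rb b q + 1.
Proof.
rewrite /rb big_ord_recl expn0 addnC big_distrr /=.
by congr (_ + _); apply: eq_bigr => i _; rewrite expnS.
Qed.

Lemma rb_expn b q : 0 < b -> (b - 1) * rb b q + 1 = b ^ q.
Proof. by move=> b_gt0; elim: q => [|q IHq]; rewrite ?rb0 ?muln0 // rbS expnS -IHq; nia. Qed.

Lemma leq_rb b q : 0 < b -> q <= rb b q.
Proof. by move=> b_gt0; elim: q => [|q IHq] //; rewrite rbS; nia. Qed.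

Lemma sum_rb_expn b (l : seq nat) : 0 < b ->
  (b - 1) * \sum_(q <- l) rb b q + size l = \sum_(q <- l) b ^ q.
Proof.
move=> b_gt0; elim: l => [|q l IHl]; first by rewrite !big_nil muln0.
by rewrite !big_cons /= -IHl -(rb_expn q b_gt0); lia.
Qed.

Definition repunit_sum b k t :=
  exists2 l : seq nat, size l = k & t = \sum_(q <- l) rb b q.

Lemma repunit_sum0 b : repunit_sum b 0 0.
Proof. by exists [::]; rewrite ?big_nil. Qed.

Lemma repunit_sumD b k t k' t' :
  repunit_sum b k t -> repunit_sum b k' t' -> repunit_sum b (k + k') (t + t').
Proof. by move=> [l <- ->] [l' <- ->]; exists (l ++ l'); rewrite ?size_cat ?big_cat. Qed.

Lemma repunit_sum_nseq b c q : repunit_sum b c (c * rb b q).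
Proof.
exists (nseq c q); first by rewrite size_nseq.
by elim: c => [|c IHc]; rewrite ?big_nil // big_cons -IHc mulSn.
Qed.

Lemma repunit_sum_eq b k t k' t' :
  repunit_sum b k t -> k = k' -> t = t' -> repunit_sum b k' t'.
Proof. by move=> Hkt <- <-. Qed.

Lemma repunit_sum_pad b k t c : repunit_sum b k t -> repunit_sum b (k + c) t.
Proof.
move=> Hkt; apply: repunit_sum_eq (repunit_sumD Hkt (repunit_sum_nseq b c 0)) _ _ => //.
by rewrite rb0 muln0 addn0.
Qed.

(* Induction on [m] via [rb b L.+1 - m.+1 = (b - 1) * rb b L + (rb b L - m)]. *)
Lemma repunit_sum_rb_sub b m L : 0 < b -> m <= L ->
  repunit_sum b (m * (b - 1) + 1) (rb b L - m).
Proof.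
move=> b_gt0; elim: m L => [|m IHm] L le_mL.
  by exists [:: L]; rewrite ?big_seq1 ?subn0.
case: L le_mL => // L le_mL.
have le_rb := leq_rb L b_gt0.
apply: (repunit_sum_eq (repunit_sumD (repunit_sum_nseq b (b - 1) L) (IHm L le_mL)) _ _).
  by lia.
by rewrite rbS; nia.
Qed.

Lemma repunit_sum_rb_subn b L : 0 < b -> repunit_sum b (L * (b - 1)) (rb b L - L).
Proof.
move=> b_gt0; elim: L => [|L IHL]; first by rewrite rb0; exact: repunit_sum0.
have le_rb := leq_rb L b_gt0.
apply: (repunit_sum_eq (repunit_sumD (repunit_sum_nseq b (b - 1) L) IHL) _ _).
  by lia.
by rewrite rbS; nia.
Qed.

(* Expanding [m] greedily in repunits, [m] and its complement [t] in [rb b N - j]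
   together use only [j * (b - 1) + 1] repunits. *)
Lemma repunit_split b N m : 1 < b -> 1 < N -> m < rb b N ->
  exists j k1 k2 t, [/\ 0 < j < N, k1 + k2 = j * (b - 1) + 1,
    repunit_sum b k1 m, repunit_sum b k2 t & j + m + t = rb b N].
Proof.
move=> b_gt1; elim: N m => [|N IHN] m // N_gt1.
have [le_N1 | N_gt1'] := leqP N 1.
  have -> : N = 1 by lia.
  rewrite !rbS rb0 muln0 add0n muln1 => lt_m.
  exists 1, m, (b - m), (b - m); split; try lia.
    by apply: (repunit_sum_eq (repunit_sum_nseq b m 1)); rewrite // rbS rb0 muln0 muln1.
  by apply: (repunit_sum_eq (repunit_sum_nseq b (b - m) 1)); rewrite // rbS rb0 muln0 muln1.
set Q := rb b N; rewrite rbS -/Q => lt_m.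
have le_NQ : N <= Q := leq_rb N (ltnW b_gt1).
have [lt_qb | le_bq] := ltnP (m %/ Q) b.
- have lt_mQ : m %% Q < Q by rewrite ltn_mod; lia.
  have [j [k1 [k2 [t [j_lt k_sum Hk1 Hk2 jmtE]]]]] := IHN _ N_gt1' lt_mQ.
  exists j.+1, (k1 + m %/ Q), (k2 + (b - 1 - m %/ Q)), (t + (b - 1 - m %/ Q) * Q).
  split; first by lia.
  + by rewrite mulSn; lia.
  + apply: (repunit_sum_eq (repunit_sumD Hk1 (repunit_sum_nseq b (m %/ Q) N))) => //.
    by rewrite -/Q addnC -divn_eq.
  + exact: repunit_sumD Hk2 (repunit_sum_nseq b _ N).
  + rewrite {1}(divn_eq m Q); move: jmtE; rewrite -/Q.
    have : (b - 1 - m %/ Q) * Q + m %/ Q * Q + Q = b * Q.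
      by rewrite -mulnDl -mulSnr; congr (_ * _); lia.
    by lia.
- have le_bQm : b * Q <= m.
    by apply: leq_trans (leq_trunc_div m Q); rewrite leq_mul2r le_bq orbT.
  have mE : m = b * Q by lia.
  exists 1, b, 0, 0; split; try lia.
    by rewrite mE; exact: repunit_sum_nseq.
  exact: repunit_sum0.
Qed.

(* [f e] is the multiplicity of [b ^ e] in a family of powers of [b] reduced
   modulo [b ^ n - 1]. *)
Definition digit_count n (f : nat -> nat) := \sum_(e < n) f e.
Definition digit_value b n (f : nat -> nat) := \sum_(e < n) f e * b ^ e.

Lemma sum_ord_indicator n c (F : nat -> nat) :
  c < n -> \sum_(e < n) (e == c :> nat) * F e = F c.
Proof.
move=> lt_cn; rewrite (bigD1 (Ordinal lt_cn)) //= eqxx mul1n big1 ?addn0 // => i.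
by rewrite -val_eqE /= => /negbTE ->.
Qed.

Lemma sum_ord_indicator1 n c : c < n -> \sum_(e < n) (e == c :> nat) = 1.
Proof.
move=> lt_cn; rewrite -[RHS](sum_ord_indicator (fun=> 1) lt_cn).
by apply: eq_bigr => e _; rewrite muln1.
Qed.

Lemma digit_count_le_value b n f : 0 < b -> digit_count n f <= digit_value b n f.
Proof. by move=> b_gt0; apply: leq_sum => e _; rewrite leq_pmulr ?expn_gt0 ?b_gt0. Qed.

(* Without carries the digits of a positive multiple of [b ^ n - 1] must all be [b - 1]. *)
Lemma digit_count_dvd_small b n f : 1 < b -> (forall e, e < n -> f e < b) ->
  (b ^ n - 1) %| digit_value b n f -> 0 < digit_count n f -> n * (b - 1) <= digit_count n f.
Proof.
move=> b_gt1 f_lt_b dvd_f count_gt0.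
pose h e := b - 1 - f e.
have count_fh : digit_count n f + digit_count n h = n * (b - 1).
  rewrite /digit_count -big_split /= -[n in n * _]card_ord -sum_nat_const.
  by apply: eq_bigr => e _; have := f_lt_b e (ltn_ord e); rewrite /h; lia.
have value_fh : digit_value b n f + digit_value b n h = b ^ n - 1.
  rewrite /digit_value -big_split /=.
  rewrite -(rb_expn n (ltnW b_gt1)) addnK /rb big_distrr /=.
  apply: eq_bigr => e _; rewrite -mulnDl; congr (_ * _).
  by have := f_lt_b e (ltn_ord e); rewrite /h; lia.
have := @digit_count_le_value b n f (ltnW b_gt1).
have := @digit_count_le_value b n h (ltnW b_gt1).
have [h0 |h_gt0] := posnP (digit_count n h); first by lia.
by have := dvdn_leq _ dvd_f; lia.
Qed.

(* Trading [b] copies of [b ^ e] for one copy of [b ^ (e + 1)], where [b ^ n] is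
   read as [1] modulo [b ^ n - 1]. *)
Lemma carry_digit b n f e : 1 < b -> 1 < n -> e < n -> b <= f e ->
  exists g, [/\ digit_count n g + (b - 1) = digit_count n f,
    digit_value b n g = digit_value b n f %[mod b ^ n - 1] & 0 < digit_count n g].
Proof.
move=> b_gt1 n_gt1 lt_en le_b_fe.
pose e' := e.+1 %% n.
have lt_e'n : e' < n by rewrite ltn_mod; lia.
have ne_e'e : e' != e.
  rewrite /e'; case: (ltnP e.+1 n) => [lt_e1n | le_ne1]; first by rewrite modn_small //; lia.
  by rewrite (_ : e.+1 = n) ?modnn; lia.
pose g x := f x + (x == e') - b * (x == e).
have gE x : g x + b * (x == e) = f x + (x == e').
  by rewrite /g subnK //; case: eqP => [-> | _]; rewrite ?muln0 ?muln1 //; lia.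
exists g.
have count_g : digit_count n g + b = digit_count n f + 1.
  have : \sum_(x < n) (g x + b * (x == e :> nat)) = \sum_(x < n) (f x + (x == e' :> nat)).
    by apply: eq_bigr => x _; exact: gE.
  by rewrite !big_split /= -big_distrr /= !sum_ord_indicator1 // muln1.
have value_g : digit_value b n g + b ^ e.+1 = digit_value b n f + b ^ e'.
  have : \sum_(x < n) (g x * b ^ x + b * ((x == e :> nat) * b ^ x))
         = \sum_(x < n) (f x * b ^ x + (x == e' :> nat) * b ^ x).
    by apply: eq_bigr => x _; rewrite mulnA -!mulnDl gE.
  by rewrite !big_split /= -big_distrr /= !sum_ord_indicator // -expnS.
split.
- by lia.
- case: (ltnP e.+1 n) => [lt_e1n | le_ne1].
    by move: value_g; rewrite /e' modn_small // => /addIn ->.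
  have e1n : e.+1 = n by lia.
  have pow_gt0 : 0 < b ^ n by rewrite expn_gt0; lia.
  move: value_g; rewrite /e' e1n modnn expn0 => value_g.
  by rewrite (_ : digit_value b n f = digit_value b n g + (b ^ n - 1)) ?modnDr //; lia.
- rewrite /digit_count (bigD1 (Ordinal lt_e'n)) //= /g eqxx (negbTE ne_e'e) muln0 subn0.
  by rewrite addn1 addSn.
Qed.

Lemma digit_count_dvd b n f : 1 < b -> 1 < n ->
  (b ^ n - 1) %| digit_value b n f -> 0 < digit_count n f -> n * (b - 1) <= digit_count n f.
Proof.
move=> b_gt1 n_gt1; have [N] := ubnP (digit_count n f); elim: N f => // N IHN f.
move=> count_lt dvd_f count_gt0.
have [/existsP[e le_b_fe] | small] := boolP [exists e : 'I_n, b <= f e].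
  have [g [count_g value_g g_gt0]] := carry_digit b_gt1 n_gt1 (ltn_ord e) le_b_fe.
  have dvd_g : (b ^ n - 1) %| digit_value b n g by rewrite /dvdn value_g.
  by have := IHN g ltac:(lia) dvd_g g_gt0; lia.
apply: digit_count_dvd_small => // e lt_en; rewrite ltnNge; apply/negP => le_b_fe.
by move/existsP: small; apply; exists (Ordinal lt_en).
Qed.

Lemma expn_mod_subn1 b n q : 0 < b -> 0 < n -> b ^ q = b ^ (q %% n) %[mod b ^ n - 1].
Proof.
move=> b_gt0 n_gt0; set B := b ^ n - 1.
have bnE : b ^ n = 1 + B by rewrite subnKC // expn_gt0 b_gt0.
rewrite {1}(divn_eq q n) expnD [q %/ n * n]mulnC expnM bnE -modnMml -modnXm modnDr.
by rewrite modnXm exp1n modnMml mul1n.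
Qed.

Lemma digits_of_sum_expn b n (l : seq nat) : 0 < b -> 0 < n ->
  exists f, digit_count n f = size l
            /\ \sum_(q <- l) b ^ q = digit_value b n f %[mod b ^ n - 1].
Proof.
move=> b_gt0 n_gt0; elim: l => [|q l [f [count_f value_f]]].
  by exists (fun=> 0); rewrite /digit_count /digit_value big_nil !big1.
exists (fun e => (e == q %% n) + f e); split.
  rewrite /digit_count big_split /= sum_ord_indicator1 ?ltn_mod //.
  by rewrite -/(digit_count n f) count_f.
rewrite /digit_value /= big_cons.
under [in RHS]eq_bigr do rewrite mulnDl.
rewrite big_split /= sum_ord_indicator ?ltn_mod // -/(digit_value b n f).
by rewrite -modnDm value_f (expn_mod_subn1 q b_gt0 n_gt0) modnDm.
Qed.

Lemma size_dvd_sum_expn b n (l : seq nat) : 1 < b -> 1 < n ->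
  (b ^ n - 1) %| \sum_(q <- l) b ^ q -> 0 < size l -> n * (b - 1) <= size l.
Proof.
move=> b_gt1 n_gt1 dvd_l l_gt0.
have [f [count_f value_f]] := digits_of_sum_expn l (ltnW b_gt1) (ltnW n_gt1).
rewrite -count_f; apply: digit_count_dvd; rewrite ?count_f //.
by rewrite /dvdn -value_f.
Qed.

Section Semigroup.

Variables a b n : nat.
Local Notation R := (rb b n).
Local Notation inS := (inS a b n).

Lemma inS_addn x y : inS x -> inS y -> inS (x + y).
Proof. by move=> Sx; elim=> [|z i i_gt0 _ IHz]; rewrite ?addn0 // addnA; apply: inS_add. Qed.

Lemma inS_repunit_sum k t : repunit_sum b k t -> inS (k * R + a * t).
Proof.
case=> l <- ->; elim: l => [|q l IHl]; first by rewrite big_nil muln0; exact: inS0.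
rewrite big_cons /= (_ : _ * R + _ = size l * R + a * \sum_(j <- l) rb b j + gen a b n q.+1).
  exact: inS_add.
by rewrite /gen /=; lia.
Qed.

Lemma inS_mul_rb k : inS (k * R).
Proof. by have := inS_repunit_sum (repunit_sum_nseq b k 0); rewrite rb0 !muln0 addn0. Qed.

Lemma repunit_sum_of_inS x : inS x -> exists k t, repunit_sum b k t /\ x = k * R + a * t.
Proof.
elim=> [|y i i_gt0 _ [k [t [[l size_l ->] ->]]]].
  by exists 0, 0; split; [exact: repunit_sum0 | rewrite muln0].
exists k.+1, (\sum_(q <- l) rb b q + rb b i.-1); split.
  by exists (rcons l i.-1); rewrite ?size_rcons ?size_l // -cats1 big_cat big_seq1.
by rewrite /gen; lia.
Qed.

End Semigroup.

Lemma coprime_repr_bounds R a c j k t : coprime R a -> 0 < j <= R ->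
  k * R + a * t = c * R + a * (R - j) -> k <= c /\ R %| t + j.
Proof.
move=> coRa /andP[j_gt0 le_jR] E.
have E' : (a * (t + j)) + k * R = (c + a) * R by nia.
have dvd_tj : R %| t + j.
  by rewrite -(Gauss_dvdr _ coRa) -(dvdn_addl _ (dvdn_mull k (dvdnn R))) E' dvdn_mull.
split=> //; have [m tjE] := dvdnP dvd_tj.
have R_gt0 : 0 < R by lia.
have /eqP : (a * m + k) * R = (c + a) * R by rewrite -E' tjE; ring.
have m_gt0 : 0 < m by case: m tjE => [|m] //=; lia.
by rewrite eqn_pmul2r // => /eqP; nia.
Qed.

Lemma coprime_decomp_int (R a : nat) (x : int) : 0 < R -> coprime R a ->
  exists m : nat, exists z : int, m < R /\ x = ((a * m)%:Z + z * R%:Z)%R.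
Proof.
move=> R_gt0 coRa; have [u [v uvE]] := Bezoutz R a.
have {}uvE : (u * R%:Z + v * a%:Z = 1)%R by rewrite uvE /gcdz /= (eqP coRa).
have R_gt0' : (0 < R%:Z)%R by rewrite ltz_nat.
have r_ge0 := modz_ge0 (x * v)%R (lt0r_neq0 R_gt0').
exists `|((x * v) %% R)%Z|%N, (x * u + a%:Z * ((x * v) %/ R)%Z)%R; split.
  by rewrite -ltz_nat gez0_abs // ltz_pmod.
have := divz_eq (x * v)%R R; set q := (_ %/ _)%Z; set r := (_ %% _)%Z => xvE.
rewrite PoszM gez0_abs // -{1}[x]mulr1 -uvE.
have -> : r = (x * v - q * R)%R by rewrite xvE addrC addKr.
ring.
Qed.

(* The paper's [(n - i + 1) * (b ^ n - 1 - a) + a * r_b(n)], with [j = n - i + 1]. *)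
Definition pf_elem a b n j := j * (b - 1) * rb b n + a * (rb b n - j).

Section PseudoFrobenius.

Variables a b n : nat.
Hypothesis b_gt1 : 1 < b.
Hypothesis n_gt1 : 1 < n.
Local Notation R := (rb b n).
Local Notation inS := (inS a b n).

Lemma leq_n_rb : n <= R.
Proof. exact: leq_rb n (ltnW b_gt1). Qed.

(* A representation [k * R + a * t] of [pf_elem j] forces [k <= j * (b - 1)] and
   [R %| t + j]; padding its [k] repunits with zeros then gives [j * (b - 1)] powers
   of [b] summing to [(b - 1) * (t + j)], a multiple of [b ^ n - 1], too few. *)
Lemma pf_elem_notin j : coprime R a -> 0 < j < n -> ~ inS (pf_elem a b n j).
Proof.
move=> coRa /andP[j_gt0 lt_jn] /repunit_sum_of_inS[k [t [[l size_l tE] E]]].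
have le_jR : j <= R by apply: leq_trans leq_n_rb; lia.
have [le_kc dvd_tj] := coprime_repr_bounds coRa (introT andP (conj j_gt0 le_jR)) (esym E).
pose l' := l ++ nseq (j * (b - 1) - k) 0.
have size_l' : size l' = j * (b - 1) by rewrite size_cat size_nseq; lia.
have sum_l' : \sum_(q <- l') b ^ q = (b - 1) * (t + j).
  rewrite -(sum_rb_expn l' (ltnW b_gt1)) size_l' big_cat /= -tE.
  rewrite big1_seq ?addn0 ?mulnDr ?[j * _]mulnC //.
  by move=> q /andP[_ /nseqP[-> _]]; exact: rb0.
have dvd_l' : (b ^ n - 1) %| \sum_(q <- l') b ^ q.
  by rewrite sum_l' -(rb_expn n (ltnW b_gt1)) addnK dvdn_mul.
have := size_dvd_sum_expn b_gt1 n_gt1 dvd_l'.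
by rewrite size_l' leq_pmul2r ?subn_gt0 // muln_gt0 subn_gt0 b_gt1 j_gt0 => /(_ isT); lia.
Qed.

Lemma pf_elem_add_gen j q : 0 < j < n -> inS (pf_elem a b n j + gen a b n q.+1).
Proof.
move=> /andP[j_gt0 lt_jn]; have le_jR : j <= R by apply: leq_trans leq_n_rb; lia.
have le_q_rb := leq_rb q (ltnW b_gt1).
rewrite /pf_elem /gen /=.
have [le_jq | lt_qj] := leqP j q.
  have := inS_repunit_sum a n (repunit_sum_pad a (repunit_sum_rb_sub (ltnW b_gt1) le_jq)).
  by congr inS; nia.
have Hlow := repunit_sum_rb_sub (m := j - q) (L := n) (ltnW b_gt1) ltac:(lia).
have := inS_repunit_sum a n (repunit_sumD Hlow (repunit_sum_rb_subn q (ltnW b_gt1))).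
by congr inS; nia.
Qed.

Lemma pf_elem_addn j s : 0 < j < n -> inS s -> s <> 0 -> inS (pf_elem a b n j + s).
Proof.
move=> j_lt [//|x [//|q] _ Sx] _.
by rewrite addnCA addnC; apply: inS_addn (pf_elem_add_gen q j_lt) Sx.
Qed.

(* With [x = a * m + z * R], the split of [m] yields [e] and [f] in S with
   [e + f = pf_elem j + R]; then [x - e] is a multiple of [R], and if it is negative
   then [pf_elem j - x = f + (k1 - z - 1) * R]. *)
Lemma notin_lt_pf_elem (x : int) : coprime R a -> ~ inSZ a b n x ->
  exists j d, [/\ 0 < j < n, inS d & Posz (pf_elem a b n j) = (x + Posz d)%R].
Proof.
move=> coRa notSx; have R_gt0 : 0 < R by apply: leq_trans leq_n_rb; lia.
have [m [z [lt_mR xE]]] := coprime_decomp_int x R_gt0 coRa.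
have [j [k1 [k2 [t [j_lt k_sum Hk1 Hk2 jmtE]]]]] := repunit_split b_gt1 n_gt1 lt_mR.
have Se := inS_repunit_sum a n Hk1.
have Sf := inS_repunit_sum a n Hk2.
have efE : k1 * R + a * m + (k2 * R + a * t) = pf_elem a b n j + R.
  have aE : a * m + a * t = a * (R - j) by rewrite -mulnDr; congr (_ * _); lia.
  have kE : k1 * R + k2 * R = j * (b - 1) * R + R by rewrite -mulnDl k_sum mulnDl mul1n.
  by rewrite /pf_elem addnACA kE aE addnAC.
have [le_k1z | lt_zk1] := lerP (Posz k1) z.
  case: notSx; exists (k1 * R + a * m + `|z - k1|%N * R); split.
    by rewrite xE; lia.
  exact: inS_addn Se (inS_mul_rb _ _ _ _).
exists j, (k2 * R + a * t + (`|k1 - z|%N - 1) * R); split => //.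
  exact: inS_addn Sf (inS_mul_rb _ _ _ _).
by rewrite xE; nia.
Qed.

Lemma pf_elemE j : j <= R ->
  Posz (pf_elem a b n j) = (Posz j * (Posz (b ^ n) - 1 - Posz a) + Posz a * Posz R)%R.
Proof.
move=> le_jR; rewrite -(rb_expn n (ltnW b_gt1)) /pf_elem !PoszD !PoszM -!subzn //; last lia.
by ring.
Qed.

Lemma pf_elem_inj : coprime R a -> {in [pred j | j <= R] &, injective (pf_elem a b n)}.
Proof.
move=> coRa j1 j2 le_j1R le_j2R /(congr1 Posz); rewrite !pf_elemE // => /addIr.
suff /mulIf + : (Posz (b ^ n) - 1 - Posz a != 0)%R by move=> /[apply] [[]].
apply/eqP => a_eq; have aE : a = (b - 1) * R.
  move: a_eq; rewrite -(rb_expn n (ltnW b_gt1)) PoszD PoszM; lia.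
by move: coRa; rewrite aE /coprime gcdnMl; have := leq_n_rb; lia.
Qed.

Lemma pseudo_frobeniusP x : coprime R a ->
  pseudo_frobenius a b n x <-> exists2 j, 0 < j < n & x = Posz (pf_elem a b n j).
Proof.
move=> coRa; split=> [[notSx PFx] | [j j_lt ->]].
  have [j [d [j_lt Sd E]]] := notin_lt_pf_elem coRa notSx.
  exists j => //; have [d0 | d_neq0] := eqVneq d 0; first by rewrite E d0 addr0.
  have [m [xdE Sm]] := PFx d Sd (elimN eqP d_neq0).
  by move: xdE Sm; rewrite -E => -[<-] /(pf_elem_notin coRa j_lt).
split=> [[m [[mE] Sm]] | s Ss s_neq0].
  by move: Sm; rewrite -mE; exact: pf_elem_notin.
by exists (pf_elem a b n j + s); split; [rewrite PoszD | exact: pf_elem_addn].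
Qed.

End PseudoFrobenius.

Local Open Scope ring_scope.

(* The hypothesis [0 < a] is implied by coprimality, since [rb b n >= n > 1]. *)
Theorem corollary30 (a b n : nat) :
  (0 < a)%N -> (1 < b)%N -> (1 < n)%N -> coprime (rb b n) a ->
  (forall x : int, pseudo_frobenius a b n x <->
     exists2 i : nat, (2 <= i <= n)%N &
       x = ((n - i + 1)%N)%:Z * ((b ^ n)%:Z - 1 - a%:Z) + a%:Z * (rb b n)%:Z)
  /\ has_type a b n n.-1.
Proof.
move=> _ b_gt1 n_gt1 coRa; have le_nR := leq_rb n (ltnW b_gt1).
split=> [x | ].
  rewrite pseudo_frobeniusP //; split=> [[j j_lt ->] | [i i_lt ->]].
    exists (n - j + 1)%N; first by lia.
    by rewrite pf_elemE //; [congr (Posz _ * _ + _); lia | lia].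
  by exists (n - i + 1)%N; rewrite ?pf_elemE //; lia.
exists [seq Posz (pf_elem a b n j) | j <- iota 1 n.-1]; split; [|split].
- rewrite map_inj_in_uniq ?iota_uniq // => j1 j2; rewrite !mem_iota => lt_j1 lt_j2.
  by move/eqP; rewrite eqz_nat => /eqP; apply: pf_elem_inj; rewrite // inE; lia.
- move=> x; rewrite pseudo_frobeniusP //; split=> [[j j_lt ->] | /mapP[j]].
    by apply/mapP; exists j; rewrite // mem_iota; lia.
  by rewrite mem_iota => j_lt ->; exists j => //; lia.
- by rewrite size_map size_iota.
Qed.
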